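(* Let $q\in\mathbb{C}\setminus\{0,1\}$ with a fixed square root $q^{1/2}$, and let $r\in\mathbb{C}$. For all integers $m,n\ge 0$, $$D_{q,x}\,H_{m,n}(x,y;q,r)=\frac{2q^{-\frac{m-1}{2}}(1-q^m)}{1-q}\,H_{m-1,n}(x,y;q,q^{1/2}r),\qquad D_{q,y}\,H_{m,n}(x,y;q,r)=\frac{2q^{-\frac{n-1}{2}}(1-q^n)}{1-q}\,H_{m,n-1}(x,y;q,q^{1/2}r),$$ with the convention $H_{-1,n}=H_{m,-1}=0$.
   Context: The continuous $q$-Hermite polynomials $H_n(x;q)\in\mathbb{C}[x]$ are defined by $H_{-1}=0$, $H_0=1$, $H_{n+1}(x;q)=2xH_n(x;q)-(1-q^n)H_{n-1}(x;q)$. The bivariate continuous $q$-Hermite polynomials $H_{m,n}(x,y;q,r)\in\mathbb{C}[x,y]$ are defined by $H_{-1,n}=H_{m,-1}=0$, $H_{0,n}(x,y;q,r)=H_n(y;q)$ and, for $m,n\ge 0$, $H_{m+1,n}=2xH_{m,n}-(1-q^m)H_{m-1,n}-q^m(1-q^n)rH_{m,n-1}$ (all evaluated at $(x,y;q,r)$). The Askey–Wilson type operator $D_q$ on polynomials $f(x)$ is defined by writing $x=\tfrac12(z+z^{-1})$ and setting $$D_qf(x)=\frac{f\big(\tfrac12(q^{1/2}z+q^{-1/2}z^{-1})\big)-f\big(\tfrac12(q^{-1/2}z+q^{1/2}z^{-1})\big)}{\tfrac12(q^{1/2}-q^{-1/2})(z-z^{-1})},$$ which is again a polynomial in $x$;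 $D_{q,x}$ and $D_{q,y}$ denote this operator acting in the variable $x$, resp. $y$, of a bivariate polynomial. *)

From HB Require Import structures.
From mathcomp Require Import all_boot all_order all_algebra.
From mathcomp Require Export complex.
Set Implicit Arguments. Unset Strict Implicit. Unset Printing Implicit Defensive.
Import Order.TTheory GRing.Theory Num.Theory.
Local Open Scope ring_scope.

Fixpoint Hq (F : fieldType) (q x : F) (n : nat) : F :=
  match n with
  | 0 => 1
  | n'.+1 =>
      match n' with
      | 0 => 2 * x
      | n''.+1 => 2 * x * Hq q x n' - (1 - q ^+ n') * Hq q x n''
      end
  end.

Fixpoint Hb (F : fieldType) (x y q r : F) (m n : nat) : F :=
  match m with
  | 0 => Hq q y n
  | m'.+1 =>
      2 * x * Hb x y q r m' n
      - (1 - q ^+ m') * (match m' with 0 => 0 | m''.+1 => Hb x y q r m'' n end)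
      - q ^+ m' * (1 - q ^+ n) * r * (match n with 0 => 0 | n'.+1 => Hb x y q r m' n' end)
  end.

Definition Hb_mpred (F : fieldType) (x y q r : F) (m n : nat) : F :=
  match m with 0 => 0 | m'.+1 => Hb x y q r m' n end.

Definition Hb_npred (F : fieldType) (x y q r : F) (m n : nat) : F :=
  match n with 0 => 0 | n'.+1 => Hb x y q r m n' end.

Definition jk (F : fieldType) (z : F) : F := (z + z^-1) / 2.

(* Askey-Wilson type operator D_q applied to f, at the point x = (z + z^{-1})/2,
   where s = q^{1/2} is the fixed square root of q. *)
Definition Dq (F : fieldType) (s : F) (f : F -> F) (z : F) : F :=
  (f ((s * z + s^-1 * z^-1) / 2) - f ((s^-1 * z + s * z^-1) / 2))
  / ((s - s^-1) * (z - z^-1) / 2).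

(* Expanding in the products H_{m-k}(x) H_{n-k}(y) gives
     H_{m,n}(x,y;q,r) = sum_k [m k]_q [n k]_q (q;q)_k (-r)^k q^(k(k-1)/2) H_{m-k}(x) H_{n-k}(y),
   which is checked against the defining recurrence in m using the q-Pascal rule and
   the absorption identities of the Gaussian binomials.  The expansion is symmetric
   under (x,m) <-> (y,n), so only D_{q,x} has to be computed.  Writing s = q^(1/2) and
   J(z) = (z + z^-1)/2, the univariate polynomials satisfy
     H_j(J(sz)) - H_j(J(z/s)) = (s^j - s^-j) (z - z^-1) H_{j-1}(J(z)),
   and absorption turns the factor s^(m-k) - s^(k-m) of the k-th term into
   (s^m - s^-m) s^k; the s^k is absorbed by replacing r with s r. *)

From HB Require Import structures.
From mathcomp Require Import all_boot all_order all_algebra.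
From mathcomp Require Import complex.
From mathcomp Require Import ring zify.
Set Implicit Arguments.
Unset Strict Implicit.
Unset Printing Implicit Defensive.
Import Order.TTheory GRing.Theory Num.Theory.
Local Open Scope ring_scope.

(* [ring] cannot use hypotheses: this reduces a goal [a = b] under [c = d] to the
   polynomial identity [a - b = k * (c - d)]. *)
Lemma eq_from_combination (R : comPzRingType) (a b c d k : R) :
  c = d -> a - b = k * (c - d) -> a = b.
Proof. by move=> -> /eqP; rewrite subrr mulr0 subr_eq0 => /eqP. Qed.

Section QBinomial.
Variables (R : comPzRingType) (q : R).

Fixpoint qbinom (m k : nat) : R :=
  match m, k with
  | _, 0 => 1
  | 0, _.+1 => 0
  | m'.+1, k'.+1 => qbinom m' k'.+1 + q ^+ (m' - k') * qbinom m' k'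
  end.

Lemma qbinom0 m : qbinom m 0 = 1. Proof. by case: m. Qed.

Lemma qbinomSS m k : qbinom m.+1 k.+1 = qbinom m k.+1 + q ^+ (m - k) * qbinom m k.
Proof. by []. Qed.

Lemma qbinom_small m k : (m < k)%N -> qbinom m k = 0.
Proof. by elim: m k => [|m IH] [|k] //= ltmk; rewrite !IH ?mulr0 ?addr0 //; lia. Qed.

Lemma qbinom_ratio m k :
  (1 - q ^+ k.+1) * qbinom m k.+1 = (1 - q ^+ (m - k)) * qbinom m k.
Proof.
elim: m k => [|m IH] k; first by rewrite sub0n subrr mul0r /= mulr0.
have [ltmk | lekm] := ltnP m k.
  rewrite (@qbinom_small m.+1 k.+1) ?mulr0 // (_ : (m.+1 - k = 0)%N); last lia.
  by rewrite expr0 subrr mul0r.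
case: k lekm => [_ | k lekm].
  by rewrite qbinomSS mulrDr IH !qbinom0 subn0 !exprS; ring.
rewrite qbinomSS mulrDr IH [in RHS]qbinomSS mulrDr [in RHS]mulrCA -(IH k) subSS.
rewrite (_ : (m - k = (m - k.+1).+1)%N); last lia.
by rewrite !exprS; ring.
Qed.

Lemma qbinom_absorbl m k :
  (1 - q ^+ k.+1) * qbinom m.+1 k.+1 = (1 - q ^+ m.+1) * qbinom m k.
Proof.
have [ltmk | lekm] := ltnP m k; first by rewrite !qbinom_small ?mulr0.
have [d ->] : exists d, m = (d + k)%N by exists (m - k)%N; lia.
rewrite qbinomSS mulrDr qbinom_ratio (_ : (d + k - k = d)%N); last lia.
by rewrite !(exprS, exprD); ring.
Qed.

Lemma qbinom_absorbr m k :
  (1 - q ^+ (m.+1 - k)) * qbinom m.+1 k = (1 - q ^+ m.+1) * qbinom m k.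
Proof.
case: k => [|k]; first by rewrite !qbinom0 subn0.
by rewrite -qbinom_ratio qbinom_absorbl.
Qed.

Fixpoint qpoch (k : nat) : R := if k is k'.+1 then (1 - q ^+ k) * qpoch k' else 1.

Lemma qpochS k : qpoch k.+1 = (1 - q ^+ k.+1) * qpoch k.
Proof. by []. Qed.

Definition hcoef (r : R) (m n k : nat) : R :=
  qbinom m k * qbinom n k * qpoch k * (- r) ^+ k * q ^+ 'C(k, 2).

Lemma hcoef0 r m n : hcoef r m n 0 = 1.
Proof. by rewrite /hcoef !qbinom0 /= !mulr1. Qed.

Lemma hcoef_small r m n k : (m < k)%N -> hcoef r m n k = 0.
Proof. by move=> ltmk; rewrite /hcoef qbinom_small // !mul0r. Qed.

Lemma hcoefC r m n k : hcoef r m n k = hcoef r n m k.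
Proof. by rewrite /hcoef [qbinom m k * _]mulrC. Qed.

Lemma hcoefZ a r m n k : hcoef (a * r) m n k = a ^+ k * hcoef r m n k.
Proof. by rewrite /hcoef -mulrN exprMn; ring. Qed.

Lemma hcoef_absorb r m n k :
  (1 - q ^+ (m.+1 - k)) * hcoef r m.+1 n k = (1 - q ^+ m.+1) * hcoef r m n k.
Proof. by rewrite /hcoef !mulrA qbinom_absorbr. Qed.

Lemma hcoefSS r m n k :
  hcoef r m.+1 n k.+1 = hcoef r m n k.+1 - q ^+ m * (1 - q ^+ n) * r * hcoef r m n.-1 k.
Proof.
case: n => [|n]; first by rewrite /hcoef /= expr0 subrr !(mulr0, mul0r, subr0).
have [ltmk | lekm] := ltnP m k.
  by rewrite /hcoef qbinomSS [qbinom m k]qbinom_small // !(mulr0, mul0r, addr0, subr0).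
rewrite /hcoef qbinomSS qpochS binS bin1 exprD.
rewrite (_ : m = (m - k) + k)%N; last lia.
apply: (eq_from_combination (k :=
  - r * q ^+ (m - k + k) * qbinom (m - k + k) k * qpoch k * (- r) ^+ k * q ^+ 'C(k, 2))
  (qbinom_absorbl n k)).
by rewrite addnK !(exprS, exprD); ring.
Qed.

End QBinomial.

Section ExplicitFormula.
Variables (F : fieldType) (q : F).

Lemma HqS x j : Hq q x j.+1 = 2 * x * Hq q x j - (1 - q ^+ j) * Hq q x j.-1.
Proof. by case: j => [|j] //=; rewrite expr0 subrr mul0r subr0 mulr1. Qed.

Definition Hterm x y r m n k := hcoef q r m n k * Hq q x (m - k) * Hq q y (n - k).

Definition Hsum x y r m n := \sum_(k < m.+1) Hterm x y r m n k.

Lemma Hsum_widen x y r m n N :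
  (m <= N)%N -> Hsum x y r m n = \sum_(k < N.+1) Hterm x y r m n k.
Proof.
move=> lemN; rewrite /Hsum (big_ord_widen N.+1) ?ltnS // big_mkcond.
apply: eq_bigr => k _; case: ltnP => // ltmk.
by rewrite /Hterm hcoef_small ?mul0r.
Qed.

Lemma HsumC x y r m n : Hsum x y r m n = Hsum y x r n m.
Proof.
rewrite (@Hsum_widen _ _ _ _ _ (m + n)) ?leq_addr //.
rewrite (@Hsum_widen _ _ _ _ _ (m + n)) ?leq_addl //.
by apply: eq_bigr => k _; rewrite /Hterm hcoefC mulrAC.
Qed.

Lemma Hsum_absorb x y r m n :
  \sum_(k < m.+1) hcoef q r m n k * ((1 - q ^+ (m - k)) * Hq q x (m - k).-1) * Hq q y (n - k)
  = (1 - q ^+ m) * Hsum x y r m.-1 n.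
Proof.
case: m => [|m]; first by rewrite big_ord1 expr0 subrr !(mul0r, mulr0).
rewrite /Hsum mulr_sumr big_ord_recr /= subnn expr0 subrr !(mul0r, mulr0) addr0.
apply: eq_bigr => k _.
rewrite /Hterm mulrCA [_ * (hcoef _ _ _ _ _ * _)]mulrA hcoef_absorb -!mulrA.
by rewrite (_ : ((m.+1 - k).-1 = m - k)%N) //; case: k => k /= ltkm; lia.
Qed.

Lemma Hsum_pascal x y r m n :
  Hsum x y r m.+1 n = \sum_(k < m.+1) hcoef q r m n k * Hq q x (m - k).+1 * Hq q y (n - k)
                     - q ^+ m * (1 - q ^+ n) * r * Hsum x y r m n.-1.
Proof.
rewrite /Hsum big_ord_recl.
under eq_bigr => k _ do rewrite /Hterm lift0 hcoefSS subSS !mulrBl.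
rewrite big_split sumrN addrA mulr_sumr.
congr (_ - _); last first.
  by apply: eq_bigr => k _; rewrite /Hterm !mulrA (_ : (n - k.+1 = n.-1 - k)%N) //; lia.
transitivity (\sum_(k < m.+2) hcoef q r m n k * Hq q x (m.+1 - k) * Hq q y (n - k)).
  by rewrite [RHS]big_ord_recl /Hterm !hcoef0.
rewrite big_ord_recr /= hcoef_small // !mul0r addr0.
by apply: eq_bigr => k _; rewrite subSn // -ltnS.
Qed.

Lemma HsumS x y r m n :
  Hsum x y r m.+1 n = 2 * x * Hsum x y r m n - (1 - q ^+ m) * Hsum x y r m.-1 n
                      - q ^+ m * (1 - q ^+ n) * r * Hsum x y r m n.-1.
Proof.
rewrite Hsum_pascal -Hsum_absorb; congr (_ - _).
rewrite /Hsum mulr_sumr -sumrB; apply: eq_bigr => k _.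
by rewrite HqS /Hterm; ring.
Qed.

Lemma Hb_sum x y r m n : Hb x y q r m n = Hsum x y r m n.
Proof.
elim/ltn_ind: m n => -[|m] IH n.
  by rewrite /Hsum big_ord1 /Hterm hcoef0 !subn0 /= !mul1r.
rewrite HsumS -IH //=; congr (_ - _ - _).
  by case: m IH => [|m] IH; rewrite ?expr0 ?subrr ?mul0r // -IH.
by case: n => [|n]; rewrite ?expr0 ?subrr ?(mulr0, mul0r) // -IH.
Qed.

Lemma HbC x y r m n : Hb x y q r m n = Hb y x q r n m.
Proof. by rewrite !Hb_sum HsumC. Qed.

End ExplicitFormula.

Section AskeyWilson.
Variables (F : fieldType) (q s : F).
Hypotheses (s2 : s ^+ 2 = q) (s_neq0 : s != 0) (two_neq0 : (2 : F) != 0).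

Local Notation h j z := (Hq q (jk z) j).

Lemma exprq j : q ^+ j = s ^+ j * s ^+ j.
Proof. by rewrite -s2 -exprM mul2n -addnn exprD. Qed.

Lemma mul2jk (z : F) : 2 * jk z = z + z^-1.
Proof. by rewrite /jk mulrC divfK. Qed.

Lemma Hq_jkSS j z : h j.+2 z = (z + z^-1) * h j.+1 z - (1 - q ^+ j.+1) * h j z.
Proof. by rewrite -mul2jk. Qed.

Lemma mulsK (z : F) : s * (z / s) = z. Proof. by rewrite mulrCA divff ?mulr1. Qed.
Lemma mulKs (z : F) : s * z / s = z. Proof. by rewrite mulrAC divff ?mul1r. Qed.

Lemma Hq_jkS j z : z != 0 ->
  h j.+1 z = z * s ^+ j * h j (z / s) + z^-1 * h j z /\
  h j.+1 z = z^-1 * s ^+ j * h j (s * z) + z * h j z.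
Proof.
elim: j z => [|j IH] z z_neq0.
  by rewrite /= mulr1 mul2jk !expr0 !mulr1; split; ring.
have zs_neq0 : z / s != 0 by rewrite mulf_neq0 ?invr_eq0.
have sz_neq0 : s * z != 0 by rewrite mulf_neq0.
have [IHl IHr] := IH z z_neq0.
have [_ IHzs] := IH _ zs_neq0; have [IHsz _] := IH _ sz_neq0.
rewrite mulsK in IHzs; rewrite mulKs in IHsz.
rewrite Hq_jkSS exprq !exprS; split.
  by rewrite IHzs IHl; field; rewrite z_neq0 s_neq0.
by rewrite IHsz IHr; field; rewrite z_neq0 s_neq0.
Qed.

Lemma Hq_jk_diff j z : z != 0 ->
  h j (s * z) - h j (z / s) = (s ^+ j - s ^- j) * (z - z^-1) * h j.-1 z.
Proof.
move=> z_neq0; case: j => [|j]; first by rewrite expr0 invr1 !subrr !mul0r.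
have zs_neq0 : z / s != 0 by rewrite mulf_neq0 ?invr_eq0.
have sz_neq0 : s * z != 0 by rewrite mulf_neq0.
have [Hl Hr] := Hq_jkS j z_neq0.
have [_ Hzs] := Hq_jkS j zs_neq0; have [Hsz _] := Hq_jkS j sz_neq0.
rewrite mulsK in Hzs; rewrite mulKs in Hsz.
rewrite Hsz Hzs /=.
apply: (eq_from_combination (k := - (s ^+ j.+1)^-1) (etrans (esym Hl) Hr)).
by rewrite !exprS; field; rewrite z_neq0 s_neq0 expf_neq0.
Qed.

Lemma sdiffE a : s ^+ a - s ^- a = - s ^- a * (1 - q ^+ a).
Proof. by rewrite exprq; field; rewrite expf_neq0. Qed.

Lemma sdiff_absorb a b (c1 c0 : F) :
  (1 - q ^+ a) * c1 = (1 - q ^+ (a + b)) * c0 ->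
  (s ^+ a - s ^- a) * c1 = (s ^+ (a + b) - s ^- (a + b)) * s ^+ b * c0.
Proof.
move=> E; rewrite !sdiffE -[LHS]mulrA E !exprD.
by field; rewrite !expf_neq0.
Qed.

Lemma Hb_jk_diff y r m n z : z != 0 ->
  Hb (jk (s * z)) y q r m n - Hb (jk (z / s)) y q r m n
  = (s ^+ m - s ^- m) * (z - z^-1) * Hb_mpred (jk z) y q (s * r) m n.
Proof.
move=> z_neq0; rewrite !Hb_sum /Hsum -sumrB.
case: m => [|m]; first by rewrite big_ord1 /Hterm /= subrr mulr0.
rewrite /= Hb_sum /Hsum mulr_sumr big_ord_recr /= /Hterm subnn /= subrr addr0.
apply: eq_bigr => k _; rewrite -mulrBl -mulrBr Hq_jk_diff // hcoefZ.
have lekm : (k <= m)%N by rewrite -ltnS.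
have Habsorb := hcoef_absorb q r m n k.
rewrite (_ : m.+1 - k = (m - k).+1)%N in Habsorb *; last lia.
rewrite (_ : q ^+ m.+1 = q ^+ ((m - k).+1 + k)) in Habsorb; last by congr (_ ^+ _); lia.
rewrite (_ : s ^+ m.+1 = s ^+ ((m - k).+1 + k)); last by congr (_ ^+ _); lia.
apply: (eq_from_combination (k := (z - z^-1) * h (m - k) z * Hq q y (n - k))
          (sdiff_absorb Habsorb)).
by ring.
Qed.

Lemma Dq_Hb y r m n z : q != 1 -> z != 0 -> z ^+ 2 != 1 ->
  Dq s (fun x => Hb x y q r m n) z
  = 2 * s ^ (1 - m%:Z) * (1 - q ^+ m) / (1 - q) * Hb_mpred (jk z) y q (s * r) m n.
Proof.
move=> q_neq1 z_neq0 z2_neq1.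
have jk_sz : (s * z + s^-1 * z^-1) / 2 = jk (s * z) by rewrite /jk invfM.
have jk_zs : (s^-1 * z + s * z^-1) / 2 = jk (z / s) by rewrite /jk invfM invrK; congr (_ / _); ring.
have s2_neq1 : 1 - s ^+ 2 != 0 by rewrite s2 subr_eq0 eq_sym.
have ss_neq1 : s * s - 1 != 0 by rewrite -expr2 s2 subr_eq0.
have zz_neq1 : z * z - 1 != 0 by rewrite -expr2 subr_eq0.
rewrite /Dq jk_sz jk_zs Hb_jk_diff // expfzDr // expr1z -exprnN sdiffE -s2.
by field; rewrite s2_neq1 ss_neq1 zz_neq1 expf_neq0 // two_neq0 z_neq0 s_neq0.
Qed.

End AskeyWilson.

Theorem proposition3p5 (R : rcfType) (q s r : R[i])
    (hq0 : q != 0) (hq1 : q != 1) (hs : s ^+ 2 = q) (m n : nat) :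
  (forall (y z : R[i]), z != 0 -> z ^+ 2 != 1 ->
     Dq s (fun x => Hb x y q r m n) z
     = 2 * s ^ (1 - m%:Z) * (1 - q ^+ m) / (1 - q)
       * Hb_mpred (jk z) y q (s * r) m n)
  /\
  (forall (x z : R[i]), z != 0 -> z ^+ 2 != 1 ->
     Dq s (fun y => Hb x y q r m n) z
     = 2 * s ^ (1 - n%:Z) * (1 - q ^+ n) / (1 - q)
       * Hb_npred x (jk z) q (s * r) m n).
Proof.
have s_neq0 : s != 0 by apply: contraNneq hq0 => s0; rewrite -hs s0 expr0n.
have two_neq0 : (2 : R[i]) != 0 by rewrite pnatr_eq0.
split=> [y | x] z z_neq0 z2_neq1; first exact: Dq_Hb.
have -> : Dq s (fun y => Hb x y q r m n) z = Dq s (fun y => Hb y x q r n m) z.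
  by rewrite /Dq 2!(HbC q x).
rewrite Dq_Hb //; case: n => [|n] //=.
by rewrite (HbC q x).
Qed.
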